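(* Let $G$ be a $\preceq$-freezing $d$-dimensional cellular automaton that simulates a $d$-dimensional cellular automaton $F$ via an encoding map $\bar\phi$. Then there exists a finite set $E\subseteq\mathbb{Z}^d$ such that, whenever a configuration $y$ is $E$-locally reachable by $F$ from a configuration $x$, we have $\bar\phi(y)\preceq\bar\phi(x)$ (cellwise, i.e. $\bar\phi(y)_z\preceq\bar\phi(x)_z$ for all $z\in\mathbb{Z}^d$).
   Context: A $d$-dimensional cellular automaton is $F=(d,Q,N,f)$ with $Q$ finite, $N\subset\mathbb{Z}^d$ finite, $f:Q^N\to Q$, global map $F(c)_z=f(c|_{z+N})$; it is $\preceq$-freezing for a partial order $\preceq$ on $Q$ if $F(c)_z\preceq c_z$ for all $c,z$. Simulation: $G$ simulates $F$ if there exist $T>0$, a rectangular block $B\subseteq\mathbb{Z}^d$ with size-vector $b$, a finite $C\subset\mathbb{Z}^d$ with $\vec0\in C$, and $\phi:Q_F^C\to Q_G^B$ such that the encoding map $\bar\phi$ defined by $\bar\phi(c)_{bz+r}=\phi(c|_{z+C})_r$ ($z\in\mathbb{Z}^d$, $r\in B$, $bz$ componentwise) is injective and satisfies $\bar\phi(F(c))=G^T(\bar\phi(c))$ for all $c$. Given a finite $E\subseteq\mathbb{Z}^d$, a configuration $y$ is $E$-locally reachable by $F$ from a configuration $x$ if for every $i\in\mathbb{Z}^d$ there are configurations $x^i,y^i$ with $x^i|_{i+E}=x|_{i+E}$, $y^i|_{i+E}=y|_{i+E}$, and $F^t(x^i)=y^i$ for some $t\geq0$. *)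

From HB Require Import structures.
From mathcomp Require Import all_boot all_order all_algebra.
Set Implicit Arguments. Unset Strict Implicit. Unset Printing Implicit Defensive.
Import GRing.Theory Num.Theory.
Local Open Scope ring_scope.

Definition cell (d : nat) := 'rV[int]_d.

(* A d-dimensional cellular automaton (d, Q, N, f): Q finite, N a finite
   neighbourhood (given as a list), and a local rule f : Q^N -> Q, modelled as
   a function of patterns (cell d -> Q) that only depends on the values on N. *)
Record CA (d : nat) := MkCA {
  ca_Q : finType;
  ca_N : seq (cell d);
  ca_f : (cell d -> ca_Q) -> ca_Q;
  ca_local : forall p p' : cell d -> ca_Q, {in ca_N, p =1 p'} -> ca_f p = ca_f p'
}.

Definition config d (A : CA d) := cell d -> ca_Q A.

Definition gmap d (A : CA d) (c : config A) : config A :=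
  fun z => ca_f (fun n => c (z + n)).

Definition freezing d (A : CA d) (le : rel (ca_Q A)) : Prop :=
  forall (c : config A) (z : cell d), le (gmap c z) (c z).

Definition partial_order (T : Type) (le : rel T) : Prop :=
  reflexive le /\ antisymmetric le /\ transitive le.

Definition in_block d (b r : cell d) : Prop :=
  forall i : 'I_d, (0 <= r ord0 i)%R /\ (r ord0 i < b ord0 i)%R.

Definition blk_quot d (b p : cell d) : cell d := \row_i ((p ord0 i) %/ (b ord0 i))%Z.
Definition blk_rem d (b p : cell d) : cell d := \row_i ((p ord0 i) %% (b ord0 i))%Z.

(* Encoding map: phibar(c)_{bz+r} = phi(c|_{z+C})_r for z in Z^d, r in B. *)
Definition phibar d (F G : CA d) (b : cell d)
  (phi : (cell d -> ca_Q F) -> cell d -> ca_Q G) (c : config F) : config G :=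
  fun p => phi (fun n => c (blk_quot b p + n)) (blk_rem b p).

Definition simulates_via d (F G : CA d) (T : nat) (b : cell d) (C : seq (cell d))
  (phi : (cell d -> ca_Q F) -> cell d -> ca_Q G) : Prop :=
  (0 < T)%N /\
  (forall i : 'I_d, 0 < b ord0 i) /\
  (0 : cell d) \in C /\
  (forall p p' : cell d -> ca_Q F, {in C, p =1 p'} -> phi p = phi p') /\
  (forall c c' : config F, phibar b phi c = phibar b phi c' -> c = c') /\
  (forall c : config F, phibar b phi (gmap c) = iter T (@gmap d G) (phibar b phi c)).

Definition locally_reachable d (F : CA d) (E : seq (cell d)) (x y : config F) : Prop :=
  forall i : cell d, exists (xi yi : config F) (t : nat),
    {in E, forall e, xi (i + e) = x (i + e)} /\
    {in E, forall e, yi (i + e) = y (i + e)} /\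
    iter t (@gmap d F) xi = yi.

From mathcomp Require Import all_boot all_order all_algebra.
Set Implicit Arguments. Unset Strict Implicit.
Local Open Scope ring_scope.

(* Since G^T commutes with the encoding, an orbit of F is encoded by an orbit
   of G, along which a freezing G can only decrease every cell. Whether y is
   reached from x matters to the encoding at a cell z only through the
   window blk_quot b z + C that phi reads, so E := C suffices. *)

Lemma iter_morph (S T : Type) (h : S -> T) (f : S -> S) (g : T -> T) n :
  {morph h : x / f x >-> g x} -> {morph h : x / iter n f x >-> iter n g x}.
Proof. by move=> hfg x; elim: n => //= n <-; rewrite hfg. Qed.

Lemma freezing_iter d (A : CA d) (le : rel (ca_Q A)) :
  reflexive le -> transitive le -> freezing le ->
  forall t (c : config A) z, le (iter t (@gmap d A) c z) (c z).
Proof.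
move=> le_refl le_trans frz; elim=> [|t IHt] c z //=.
exact: le_trans (frz _ z) (IHt c z).
Qed.

Lemma phibar_iter d (F G : CA d) T b
    (phi : (cell d -> ca_Q F) -> cell d -> ca_Q G) :
  (forall c : config F, phibar b phi (gmap c) = iter T (@gmap d G) (phibar b phi c)) ->
  forall t (c : config F),
    phibar b phi (iter t (@gmap d F) c) = iter (t * T) (@gmap d G) (phibar b phi c).
Proof. by move=> sim t c; rewrite iterM; apply: iter_morph. Qed.

Lemma phibar_local d (F G : CA d) b (C : seq (cell d))
    (phi : (cell d -> ca_Q F) -> cell d -> ca_Q G) :
  (forall p p' : cell d -> ca_Q F, {in C, p =1 p'} -> phi p = phi p') ->
  forall (c c' : config F) z,
    {in C, forall e, c (blk_quot b z + e) = c' (blk_quot b z + e)} ->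
    phibar b phi c z = phibar b phi c' z.
Proof. by move=> phi_loc c c' z eq_cc'; rewrite /phibar (phi_loc _ _ eq_cc'). Qed.

Theorem mainTheorem9 (d : nat) (F G : CA d) (le : rel (ca_Q G))
  (T : nat) (b : cell d) (C : seq (cell d))
  (phi : (cell d -> ca_Q F) -> cell d -> ca_Q G) :
  partial_order le -> freezing le -> simulates_via T b C phi ->
  exists E : seq (cell d),
    forall x y : config F, locally_reachable E x y ->
      forall z : cell d, le (phibar b phi y z) (phibar b phi x z).
Proof.
move=> [le_refl [_ le_trans]] frz [_ [_ [_ [phi_loc [_ sim]]]]].
exists C => x y reach z.
have [xi [yi [t [eq_x [eq_y orbit]]]]] := reach (blk_quot b z).
rewrite -(phibar_local phi_loc eq_y) -(phibar_local phi_loc eq_x).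
by rewrite -orbit (phibar_iter sim); apply: freezing_iter.
Qed.
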